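(* Let $R$ be a Noetherian ring. Then the set $\mathrm{Princ}(R)$ of principal ideals of $R$ is dense in $\mathcal I(R)$ with respect to the constructible topology if and only if $R$ is a principal ideal ring.
   Context: $\mathcal I(R)$ is the set of ideals of $R$ with the Zariski topology having basis of open sets $\mathcal B(x_1,\ldots,x_n):=\{I\in\mathcal I(R)\mid x_1,\ldots,x_n\in I\}$; it is a spectral space. The constructible topology is the coarsest topology in which all open quasi-compact subsets of $\mathcal I(R)$ are clopen. *)

From Stdlib Require List.
From mathcomp Require Import all_boot all_algebra.
Set Implicit Arguments. Unset Strict Implicit. Unset Printing Implicit Defensive.
Import GRing.Theory.
Local Open Scope ring_scope.

Definition is_topology (T : Type) (O : (T -> Prop) -> Prop) : Prop :=
  [/\ O (fun _ => True),
      (forall U V, O U -> O V -> O (fun x => U x /\ V x))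
    & (forall C : (T -> Prop) -> Prop, (forall U, C U -> O U) ->
         O (fun x => exists2 U, C U & U x))].

Definition generated_topology (T : Type) (S : (T -> Prop) -> Prop)
  : (T -> Prop) -> Prop :=
  fun U => forall O, is_topology O -> (forall V, S V -> O V) -> O U.

Definition quasi_compact (T : Type) (O : (T -> Prop) -> Prop) (U : T -> Prop) :=
  forall C : (T -> Prop) -> Prop, (forall V, C V -> O V) ->
    (forall x, U x -> exists2 V, C V & V x) ->
    exists s : seq (T -> Prop), (forall V, List.In V s -> C V) /\
      (forall x, U x -> exists2 V, List.In V s & V x).

Definition dense_in (T : Type) (O : (T -> Prop) -> Prop) (P : T -> Prop) :=
  forall U, O U -> (exists x, U x) -> exists x, U x /\ P x.

Definition is_ideal (R : comPzRingType) (I : R -> Prop) : Prop :=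
  [/\ I 0, (forall x y, I x -> I y -> I (x + y)) & (forall a x, I x -> I (a * x))].

Record ideal (R : comPzRingType) := Ideal {
  icarrier :> R -> Prop ;
  iprop : is_ideal icarrier }.

Definition principal (R : comPzRingType) (I : R -> Prop) : Prop :=
  exists a : R, forall x, I x <-> exists r : R, x = r * a.

Definition Princ (R : comPzRingType) : ideal R -> Prop := fun I => principal I.

Definition principal_ideal_ring (R : comPzRingType) : Prop :=
  forall I : R -> Prop, is_ideal I -> principal I.

Definition noetherian (R : comPzRingType) : Prop :=
  forall f : nat -> (R -> Prop), (forall n, is_ideal (f n)) ->
    (forall n x, f n x -> f n.+1 x) ->
    exists N, forall n x, (N <= n)%N -> f n x -> f N x.

Definition zbasic (R : comPzRingType) (s : seq R) : ideal R -> Prop :=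
  fun I => forall x, List.In x s -> I x.

Definition zariski_open (R : comPzRingType) (U : ideal R -> Prop) : Prop :=
  forall I, U I -> exists s : seq R, zbasic s I /\ (forall J, zbasic s J -> U J).

Definition constructible_open (R : comPzRingType) : (ideal R -> Prop) -> Prop :=
  generated_topology (fun W => exists U : ideal R -> Prop,
    [/\ zariski_open U, quasi_compact (@zariski_open R) U &
        (W = U \/ W = (fun I => ~ U I))]).

From mathcomp Require Import all_boot all_algebra.
From mathcomp Require Import ring.
From Stdlib Require Import Classical ClassicalEpsilon.
Set Implicit Arguments. Unset Strict Implicit. Unset Printing Implicit Defensive.
Import GRing.Theory.
Local Open Scope ring_scope.

(* If R is not a principal ideal ring, Noetherianity yields an ideal I maximal
   among the non-principal ones.  Any ideal J strictly above I is principal,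
   J = dR, and maximality forces I = dI; Nakayama gives r with (1 - rd)I = 0.
   An annihilator c of I lies in I: otherwise I + cR = eR would give I = I^2,
   and I would be generated by an idempotent.  Hence 1 = (1 - rd) + rd is in J,
   so I is a maximal ideal, and for generators x_1, ..., x_n of I the
   constructible open set B(x_1, ..., x_n) \ B(1) = {I} contains no principal
   ideal. *)

Fixpoint lincomb (R : comPzRingType) (C : R -> Prop) (s : seq R) : R -> Prop :=
  match s with
  | [::] => fun x => x = 0
  | a :: s' => fun x => exists c y, [/\ C c, lincomb C s' y & x = c * a + y]
  end.

Definition ideal_span (R : comPzRingType) (s : seq R) : R -> Prop :=
  lincomb (fun _ => True) s.

Section IdealSpan.

Variable R : comPzRingType.
Implicit Types (C I J : R -> Prop) (s : seq R).

Lemma lincomb_is_ideal C s : is_ideal C -> is_ideal (lincomb C s).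
Proof.
move=> [C0 CD CM]; elim: s => [|a s [h0 hD hM]] /=.
  by split=> //; [move=> x y -> ->; ring | move=> b x ->; ring].
split.
- by exists 0, 0; split=> //; ring.
- move=> x y [c1 [y1 [Cc1 h1 ->]]] [c2 [y2 [Cc2 h2 ->]]].
  by exists (c1 + c2), (y1 + y2); split; [exact: CD | exact: hD | ring].
- move=> b x [c [y [Cc h ->]]].
  by exists (b * c), (b * y); split; [exact: CM | exact: hM | ring].
Qed.

Lemma ideal_span_is_ideal s : is_ideal (ideal_span s).
Proof. by apply: lincomb_is_ideal; split. Qed.

Lemma ideal_span_mem s x : List.In x s -> ideal_span s x.
Proof.
elim: s => [|a s IH] //= [<-|sx].
- by exists 1, 0; split=> //; [case: (ideal_span_is_ideal s) | ring].
- by exists 0, x; split=> //; [exact: IH | ring].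
Qed.

Lemma ideal_span_min I s :
  is_ideal I -> (forall x, List.In x s -> I x) -> forall x, ideal_span s x -> I x.
Proof.
move=> [I0 ID IM]; elim: s => [|a s IH] sI x /=; first by move->.
move=> [c [y [_ spy ->]]]; apply: (ID); first by apply: (IM); apply: (sI); left.
by apply: IH => // z sz; apply: (sI); right.
Qed.

Lemma lincomb_mul C s c y :
  is_ideal C -> C c -> ideal_span s y -> lincomb C s (c * y).
Proof.
move=> [_ _ CM] Cc; elim: s y => [|a s IH] y /=; first by move->; ring.
move=> [r [y' [_ spy' ->]]].
by exists (r * c), (c * y'); split; [exact: CM | exact: IH | ring].
Qed.

Lemma principal_ideal_is_ideal (d : R) : is_ideal (fun x => exists r, x = r * d).
Proof.
split; first by exists 0; rewrite mul0r.
  by move=> _ _ [r1 ->] [r2 ->]; exists (r1 + r2); rewrite mulrDl.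
by move=> a _ [r ->]; exists (a * r); rewrite mulrA.
Qed.

(* Generators are eliminated one at a time, multiplying u by an element that is
   1 modulo J. *)
Lemma nakayama_seq J s t :
  is_ideal J -> (forall x, List.In x t -> List.In x s) ->
  (exists u, J (1 - u) /\ forall x, List.In x s -> lincomb J t (u * x)) ->
  exists u, J (1 - u) /\ forall x, List.In x s -> u * x = 0.
Proof.
move=> hJ; have [_ JD JM] := hJ.
elim: t => [|a t IH] ts [u [Ju ut]]; first by exists u.
apply: IH; first by move=> x tx; apply: ts; right.
have [j1 [y [Jj1 ty ua]]] := ut a (ts a (or_introl erefl)).
have [_ tD tM] := lincomb_is_ideal t hJ.
exists ((u - j1) * u); split.
- have -> : 1 - (u - j1) * u = (1 - u) + j1 + (u - j1) * (1 - u) by ring.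
  by apply: (JD); [exact: JD | exact: JM].
- move=> x sx; have [j' [y' [Jj' ty' ux]]] := ut x sx.
  have -> : (u - j1) * u * x = j' * y + (u - j1) * y'.
    by rewrite -mulrA ux mulrDr mulrCA -[y](addKr (j1 * a)) -ua; ring.
  by apply: (tD); [exact: tM | exact: tM].
Qed.

Lemma nakayama J s :
  is_ideal J -> (forall x, List.In x s -> lincomb J s x) ->
  exists j, J j /\ forall x, ideal_span s x -> (1 - j) * x = 0.
Proof.
move=> hJ sJs; have [J0 _ _] := hJ.
have [|u [Ju kill]] := nakayama_seq (t := s) hJ (fun x (sx : List.In x s) => sx).
  by exists 1; split=> [|x sx]; [rewrite subrr | rewrite mul1r; exact: sJs].
exists (1 - u); split=> // x; rewrite opprB addrC subrK.
apply: ideal_span_min kill x.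
split; first by rewrite mulr0.
  by move=> a b ua ub; rewrite mulrDr ua ub addr0.
by move=> a b ub; rewrite mulrCA ub mulr0.
Qed.

Lemma fg_idempotent_principal I s :
  is_ideal I -> (forall x, I x <-> ideal_span s x) ->
  (forall x, List.In x s -> lincomb I s x) -> principal I.
Proof.
move=> hI Is sIs; have [_ _ IM] := hI.
have [j [Ij kill]] := nakayama hI sIs.
exists j => x; split=> [/Is/kill/eqP|[r ->]]; last exact: IM.
by rewrite mulrBl mul1r subr_eq0 => /eqP {1}->; exists x; rewrite mulrC.
Qed.

End IdealSpan.

Section Noetherian.

Variables (R : comPzRingType) (hR : noetherian R).

Lemma noetherian_maximal (P : (R -> Prop) -> Prop) I0 :
  (forall J, P J -> is_ideal J) -> P I0 ->
  exists I, P I /\ forall J, P J -> (forall x, I x -> J x) -> forall x, J x -> I x.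
Proof.
move=> Pideal PI0; apply: NNPP => nomax.
pose bigger I J := [/\ P J, forall x, I x -> J x & exists x, J x /\ ~ I x].
have grow I : P I -> exists J, bigger I J.
  move=> PI; apply: NNPP => nJ; apply: (nomax); exists I; split=> // J PJ IJ x Jx.
  by apply: NNPP => nIx; apply: (nJ); exists J; split=> //; exists x.
pose next I := epsilon (inhabits I0) (bigger I).
pose chain := fix chain n := if n is m.+1 then next (chain m) else I0.
have Pchain n : P (chain n).
  by elim: n => // n Pn; case: (epsilon_spec (inhabits I0) _ (grow _ Pn)).
have chain_bigger n : bigger (chain n) (chain n.+1).
  exact: epsilon_spec (inhabits I0) _ (grow _ (Pchain n)).
have [N stable] := hR (fun n => Pideal _ (Pchain n))
  (fun n => let: And3 _ sub _ := chain_bigger n in sub).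
have [_ _ [x [Nx nx]]] := chain_bigger N.
by apply: nx; apply: (stable N.+1).
Qed.

Lemma noetherian_fin_gen (I : R -> Prop) :
  is_ideal I -> exists s, forall x, I x <-> ideal_span s x.
Proof.
move=> hI.
pose P (J : R -> Prop) := exists2 t, J = ideal_span t & forall x, ideal_span t x -> I x.
have Pideal J : P J -> is_ideal J by move=> [t -> _]; exact: ideal_span_is_ideal.
have [|_ [[t -> tI] tmax]] := noetherian_maximal Pideal (I0 := ideal_span (Nil R)).
  by exists [::] => // x ->; case: hI.
exists t => x; split=> [Ix|]; last exact: tI.
apply: (tmax (ideal_span (x :: t))); last by apply: ideal_span_mem; left.
- exists (x :: t) => //; apply: ideal_span_min => // y [<-|ty] //.
  exact/tI/ideal_span_mem.
- by move=> y ty; exists 0, y; split=> //; ring.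
Qed.

End Noetherian.

Lemma zbasic_zariski_open (R : comPzRingType) (s : seq R) : zariski_open (zbasic s).
Proof. by move=> I sI; exists s. Qed.

(* B(s) has the least element, the ideal generated by s, so one member of any
   open cover already covers it. *)
Lemma zbasic_quasi_compact (R : comPzRingType) (s : seq R) :
  quasi_compact (@zariski_open R) (zbasic s).
Proof.
move=> C Copen cover.
have [V CV Vs] := cover (Ideal (ideal_span_is_ideal s)) (@ideal_span_mem R s).
have [t [spant Vt]] := Copen V CV _ Vs.
exists [:: V]; split=> [W [<-|[]]|J sJ] //; exists V; first by left.
by apply: Vt => y ty; apply: ideal_span_min (iprop J) sJ _ (spant y ty).
Qed.

Lemma constructible_open_zbasic_diff (R : comPzRingType) (s t : seq R) :
  constructible_open (fun K : ideal R => zbasic s K /\ ~ zbasic t K).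
Proof.
move=> O [_ Ointer _] Osub; apply: Ointer; apply: Osub.
- by exists (zbasic s); split;
    [exact: zbasic_zariski_open | exact: zbasic_quasi_compact | left].
- by exists (zbasic t); split;
    [exact: zbasic_zariski_open | exact: zbasic_quasi_compact | right].
Qed.

Section MaximalNonPrincipal.

Variables (R : comPzRingType) (I : R -> Prop) (s : seq R).
Hypotheses (hI : is_ideal I) (Is : forall x, I x <-> ideal_span s x)
  (nonprincipal : ~ principal I)
  (maxI : forall J, is_ideal J /\ ~ principal J ->
     (forall x, I x -> J x) -> forall x, J x -> I x).

Lemma max_nonprincipal_above_principal J x :
  is_ideal J -> (forall y, I y -> J y) -> J x -> ~ I x -> principal J.
Proof. by move=> hJ IJ Jx nIx; apply: NNPP => nJ; apply/nIx/(maxI (conj hJ nJ)). Qed.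

Lemma max_nonprincipal_proper : ~ I 1.
Proof.
have [_ _ IM] := hI; move=> I1; apply: (nonprincipal); exists 1 => x.
by split=> [Ix|[r ->]]; [exists x; rewrite mulr1 | exact: IM].
Qed.

(* The colon ideal (I : e) contains I; were it larger, it would be principal,
   fR, and then I = efR. *)
Lemma max_nonprincipal_colon e :
  (forall x, I x -> exists r, x = r * e) -> forall x, I x -> exists2 y, I y & x = y * e.
Proof.
move=> Ie; have [I0 ID IM] := hI.
have colonI y : I (y * e) -> I y.
  move=> Iye; apply: NNPP => nIy.
  have colon_ideal : is_ideal (fun y => I (y * e)).
    split; first by rewrite mul0r.
      by move=> a b ha hb; rewrite mulrDl; exact: ID.
    by move=> a b hb; rewrite -mulrA; exact: IM.
  have [f colonf] := max_nonprincipal_above_principal colon_ideal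
    (fun x Ix => eq_ind _ I (IM e x Ix) _ (mulrC e x)) Iye nIy.
  apply: (nonprincipal); exists (f * e) => x; split.
  - move=> /[dup] Ix /Ie [r xre]; have /colonf [r' rr'] : I (r * e) by rewrite -xre.
    by exists r'; rewrite xre rr' mulrA.
  - by move=> [r ->]; rewrite mulrA; apply/colonf; exists r.
by move=> x /[dup] Ix /Ie [r xre]; exists r => //; apply: colonI; rewrite -xre.
Qed.

Lemma max_nonprincipal_annihilator d :
  (forall x, I x -> exists r, x = r * d) ->
  exists r, forall x, I x -> (1 - r * d) * x = 0.
Proof.
move=> Id.
have [|j [[r ->] kill]] := nakayama (principal_ideal_is_ideal d) (s := s).
  move=> x /ideal_span_mem/Is/(max_nonprincipal_colon Id) [y Iy ->].
  rewrite mulrC; apply: lincomb_mul (principal_ideal_is_ideal d) _ ((Is y).1 Iy).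
  by exists 1; rewrite mul1r.
by exists r => x /Is; exact: kill.
Qed.

(* If c were not in I, then I + cR = eR with e = i + tc, and I = eI = iI would
   be idempotent. *)
Lemma max_nonprincipal_annihilator_mem c : (forall x, I x -> c * x = 0) -> I c.
Proof.
move=> cI; apply: NNPP => nIc; have [I0 ID IM] := hI.
pose E x := exists i t, I i /\ x = i + t * c.
have E_ideal : is_ideal E.
  split; first by exists 0, 0; split=> //; ring.
    move=> _ _ [i1 [t1 [Ii1 ->]]] [i2 [t2 [Ii2 ->]]].
    by exists (i1 + i2), (t1 + t2); split; [exact: ID | ring].
  move=> a _ [i [t [Ii ->]]]; exists (a * i), (a * t); split; [exact: IM | ring].
have IE x : I x -> E x by move=> Ix; exists x, 0; split=> //; ring.
have [|e Ee] := max_nonprincipal_above_principal E_ideal IE _ nIc.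
  by exists 0, 1; split=> //; ring.
have [i0 [t0 [Ii0 ei0t0]]] : E e by apply/Ee; exists 1; rewrite mul1r.
apply: (nonprincipal); apply: (fg_idempotent_principal hI Is) => x /ideal_span_mem/Is.
move=> /(max_nonprincipal_colon (fun y Iy => (Ee y).1 (IE y Iy))) [y Iy ->].
have -> : y * e = i0 * y by rewrite ei0t0 mulrC mulrDl -mulrA cI // mulr0 addr0.
exact: lincomb_mul hI Ii0 ((Is y).1 Iy).
Qed.

Lemma max_nonprincipal_above_full J x :
  is_ideal J -> (forall y, I y -> J y) -> J x -> ~ I x -> J 1.
Proof.
move=> hJ IJ Jx nIx; have [_ JD JM] := hJ.
have [d Jd] := max_nonprincipal_above_principal hJ IJ Jx nIx.
have [r kill] := max_nonprincipal_annihilator (fun y Iy => (Jd y).1 (IJ y Iy)).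
rewrite -(subrK (r * d) 1); apply: JD; first exact/IJ/max_nonprincipal_annihilator_mem.
by apply: JM; apply/Jd; exists 1; rewrite mul1r.
Qed.

End MaximalNonPrincipal.

Theorem proposition5p7 (R : comPzRingType) (hR : noetherian R) :
  dense_in (@constructible_open R) (@Princ R) <-> principal_ideal_ring R.
Proof.
split=> [dense|pir]; last first.
  by move=> U _ [I UI]; exists I; split=> //; exact: pir (iprop I).
apply: NNPP => npir.
have [I0 [hI0 nI0]] : exists I0 : R -> Prop, is_ideal I0 /\ ~ principal I0.
  by apply: NNPP => none; apply: npir => I hI; apply: NNPP => nI; apply: none; exists I.
have [I [[hI nI] maxI]] := noetherian_maximal hR
  (fun J (PJ : is_ideal J /\ ~ principal J) => PJ.1) (conj hI0 nI0).
have [s Is] := noetherian_fin_gen hR hI.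
have [K [[Ks K1] [a Ka]]] :
    exists K : ideal R, (zbasic s K /\ ~ zbasic [:: 1] K) /\ Princ K.
  apply: dense; first exact: constructible_open_zbasic_diff.
  exists (Ideal hI); split=> [x /ideal_span_mem/Is //|s1].
  by apply: (max_nonprincipal_proper hI nI); apply: s1; left.
have IK x : I x -> K x by move/Is; apply: ideal_span_min (iprop K) Ks x.
have [x Kx nIx] : exists2 x, K x & ~ I x.
  apply: NNPP => KI; apply: nI; exists a => x; split=> [/IK/Ka //|/Ka Kx].
  by apply: NNPP => nIx; apply: KI; exists x.
apply: K1 => _ [<-|[]].
exact: (max_nonprincipal_above_full hI Is nI maxI (iprop K) IK Kx nIx).
Qed.
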